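(* The monoidal category $\mathbf{CrysTL}$ does not admit a braiding.
   Context: $\Bbbk$ is a field. $\mathcal{TL}_0(\Bbbk)$ is the strict $\Bbbk$-linear monoidal category with objects $\mathbf 0,\mathbf 1,\dots$, $\mathbf m\otimes\mathbf n=\mathbf{m+n}$, generated by $\mathrm{cup}:\mathbf 0\to\mathbf 2$ and $\mathrm{cap}:\mathbf 2\to\mathbf 0$ subject to $(\mathrm{id}_{\mathbf 1}\otimes\mathrm{cap})\circ(\mathrm{cup}\otimes\mathrm{id}_{\mathbf 1})=0=(\mathrm{cap}\otimes\mathrm{id}_{\mathbf 1})\circ(\mathrm{id}_{\mathbf 1}\otimes\mathrm{cup})$ and $\mathrm{cap}\circ\mathrm{cup}=\mathrm{id}_{\mathbf 0}$. $\mathbf{CrysTL}$ is its Cauchy completion (idempotent completion of the additive envelope) with the induced monoidal structure. *)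

From HB Require Import structures.
From mathcomp Require Import all_boot all_algebra.
Set Implicit Arguments. Unset Strict Implicit. Unset Printing Implicit Defensive.

(* TL_0(k): the strict k-linear monoidal category with objects 0,1,2,...     *)
(* (m (x) n = m + n), freely generated by cup : 0 -> 2, cap : 2 -> 0 modulo  *)
(*   (id_1 (x) cap) o (cup (x) id_1) = 0 = (cap (x) id_1) o (id_1 (x) cup),   *)
(*   cap o cup = id_0.                                                       *)
(* It is presented syntactically: terms of the free k-linear strict monoidal *)
(* category, with typing (dom/cod/wt) and the congruence [eqv] generated by  *)
(* the k-linear-category and strict-monoidal axioms plus the three relations.*)
(* Hom(m,n) = well-typed terms of type m -> n modulo [eqv].                  *)

Section TL0.
Variable k : fieldType.

Inductive tm : Type :=
| Id of nat
| Cup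
| Cap
| Comp of tm & tm          (* Comp f g = f o g *)
| Tens of tm & tm
| Zero of nat & nat
| Add of tm & tm
| Scal of k & tm.

Fixpoint dom (t : tm) : nat :=
  match t with
  | Id n => n | Cup => 0 | Cap => 2
  | Comp f g => dom g
  | Tens f g => dom f + dom g
  | Zero m _ => m
  | Add f _ => dom f
  | Scal _ f => dom f
  end.

Fixpoint cod (t : tm) : nat :=
  match t with
  | Id n => n | Cup => 2 | Cap => 0
  | Comp f g => cod f
  | Tens f g => cod f + cod g
  | Zero _ n => n
  | Add f _ => cod f
  | Scal _ f => cod f
  end.

Fixpoint wt (t : tm) : bool :=
  match t with
  | Id _ | Cup | Cap | Zero _ _ => true
  | Comp f g => [&& wt f, wt g & cod g == dom f]
  | Tens f g => wt f && wt g
  | Add f g => [&& wt f, wt g, dom f == dom g & cod f == cod g]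
  | Scal _ f => wt f
  end.

(* Defining axioms (only used between well-typed terms of equal type). *)
Inductive ax : tm -> tm -> Prop :=
| ax_addA f g h : ax (Add f (Add g h)) (Add (Add f g) h)
| ax_addC f g : ax (Add f g) (Add g f)
| ax_add0 f : ax (Add f (Zero (dom f) (cod f))) f
| ax_addN f : ax (Add f (Scal (-1)%R f)) (Zero (dom f) (cod f))
| ax_scalD c f g : ax (Scal c (Add f g)) (Add (Scal c f) (Scal c g))
| ax_scalDl c d f : ax (Scal (c + d)%R f) (Add (Scal c f) (Scal d f))
| ax_scalA c d f : ax (Scal (c * d)%R f) (Scal c (Scal d f))
| ax_scal1 f : ax (Scal 1%R f) f
| ax_compA f g h : ax (Comp f (Comp g h)) (Comp (Comp f g) h)
| ax_compIdl f : ax (Comp (Id (cod f)) f) f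
| ax_compIdr f : ax (Comp f (Id (dom f))) f
| ax_compDl f f' g : ax (Comp (Add f f') g) (Add (Comp f g) (Comp f' g))
| ax_compDr f g g' : ax (Comp f (Add g g')) (Add (Comp f g) (Comp f g'))
| ax_compZl c f g : ax (Comp (Scal c f) g) (Scal c (Comp f g))
| ax_compZr c f g : ax (Comp f (Scal c g)) (Scal c (Comp f g))
| ax_tensA f g h : ax (Tens f (Tens g h)) (Tens (Tens f g) h)
| ax_tens1l f : ax (Tens (Id 0) f) f
| ax_tens1r f : ax (Tens f (Id 0)) f
| ax_tensId m n : ax (Tens (Id m) (Id n)) (Id (m + n))
| ax_interchange f g f' g' :
    ax (Comp (Tens f g) (Tens f' g')) (Tens (Comp f f') (Comp g g'))
| ax_tensDl f f' g : ax (Tens (Add f f') g) (Add (Tens f g) (Tens f' g))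
| ax_tensDr f g g' : ax (Tens f (Add g g')) (Add (Tens f g) (Tens f g'))
| ax_tensZl c f g : ax (Tens (Scal c f) g) (Scal c (Tens f g))
| ax_tensZr c f g : ax (Tens f (Scal c g)) (Scal c (Tens f g))
| ax_zig : ax (Comp (Tens (Id 1) Cap) (Tens Cup (Id 1))) (Zero 1 1)
| ax_zag : ax (Comp (Tens Cap (Id 1)) (Tens (Id 1) Cup)) (Zero 1 1)
| ax_loop : ax (Comp Cap Cup) (Id 0).

Inductive eqv : tm -> tm -> Prop :=
| eqv_ax t u : ax t u -> wt t -> wt u -> dom t = dom u -> cod t = cod u ->
    eqv t u
| eqv_refl t : eqv t t
| eqv_sym t u : eqv t u -> eqv u t
| eqv_trans t u v : eqv t u -> eqv u v -> eqv t v
| eqv_comp f f' g g' : eqv f f' -> eqv g g' -> eqv (Comp f g) (Comp f' g')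
| eqv_tens f f' g g' : eqv f f' -> eqv g g' -> eqv (Tens f g) (Tens f' g')
| eqv_add f f' g g' : eqv f f' -> eqv g g' -> eqv (Add f g) (Add f' g')
| eqv_scal c f f' : eqv f f' -> eqv (Scal c f) (Scal c f').

(* Cauchy completion CrysTL: additive envelope (objects = finite lists of    *)
(* objects of TL_0, morphisms = matrices of morphisms) followed by the       *)
(* idempotent completion (objects = (list, idempotent matrix)).              *)
(* Matrices are functions nat -> nat -> tm (row = target index, column =     *)
(* source index), only meaningful in range.                                  *)

Definition mat := nat -> nat -> tm.

Definition ismor (s t : seq nat) (M : mat) : Prop :=
  forall i j, i < size t -> j < size s ->
    [/\ wt (M i j), dom (M i j) = nth 0 s j & cod (M i j) = nth 0 t i].

Definition meqv (s t : seq nat) (M N : mat) : Prop :=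
  forall i j, i < size t -> j < size s -> eqv (M i j) (N i j).

(* matrix product M o N, with N : s -> m and M : m -> t *)
Definition mmul (s m t : seq nat) (M N : mat) : mat :=
  fun i j => foldr (fun l acc => Add (Comp (M i l) (N l j)) acc)
                   (Zero (nth 0 s j) (nth 0 t i)) (iota 0 (size m)).

(* tensor product in the additive envelope (lexicographic ordering) *)
Definition stens (s t : seq nat) : seq nat :=
  flatten [seq [seq a + b | b <- t] | a <- s].

(* M (x) N where N has r rows and c columns *)
Definition mtens (r c : nat) (M N : mat) : mat :=
  fun i j => Tens (M (i %/ r) (j %/ c)) (N (i %% r) (j %% c)).

Record cobj := CObj { osz : seq nat; oidem : mat }.

Definition isobj (X : cobj) : Prop :=
  ismor (osz X) (osz X) (oidem X) /\
  meqv (osz X) (osz X) (mmul (osz X) (osz X) (osz X) (oidem X) (oidem X))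
       (oidem X).

Definition ishom (X Y : cobj) (M : mat) : Prop :=
  ismor (osz X) (osz Y) M /\
  meqv (osz X) (osz Y)
       (mmul (osz X) (osz Y) (osz Y) (oidem Y)
             (mmul (osz X) (osz X) (osz Y) M (oidem X))) M.

Definition hom_eq (X Y : cobj) (M N : mat) : Prop := meqv (osz X) (osz Y) M N.

(* composition M o N with N : X -> Y, M : Y -> Z *)
Definition ccomp (X Y Z : cobj) (M N : mat) : mat :=
  mmul (osz X) (osz Y) (osz Z) M N.

Definition cid (X : cobj) : mat := oidem X.

Definition otens (X Y : cobj) : cobj :=
  CObj (stens (osz X) (osz Y))
       (mtens (size (osz Y)) (size (osz Y)) (oidem X) (oidem Y)).

(* tensor product of morphisms f : X -> X', g : Y -> Y' *)
Definition htens (Y Y' : cobj) (f g : mat) : mat :=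
  mtens (size (osz Y')) (size (osz Y)) f g.

(* A braiding on CrysTL.  The induced monoidal structure on the Cauchy      *)
(* completion has associators and unitors given by the identity idempotent  *)
(* matrices (objects (X(x)Y)(x)Z and X(x)(Y(x)Z) have the same underlying    *)
(* list and equivalent idempotents), so the hexagon axioms are stated in    *)
(* their strict form as equalities of matrices of morphisms.                *)
Record braiding := Braiding {
  br : cobj -> cobj -> mat;
  br_hom : forall X Y, isobj X -> isobj Y ->
    ishom (otens X Y) (otens Y X) (br X Y);
  br_iso : forall X Y, isobj X -> isobj Y ->
    exists D, ishom (otens Y X) (otens X Y) D /\
      hom_eq (otens X Y) (otens X Y)
        (ccomp (otens X Y) (otens Y X) (otens X Y) D (br X Y))
        (cid (otens X Y)) /\
      hom_eq (otens Y X) (otens Y X)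
        (ccomp (otens Y X) (otens X Y) (otens Y X) (br X Y) D)
        (cid (otens Y X));
  br_nat : forall X X' Y Y' f g,
    isobj X -> isobj X' -> isobj Y -> isobj Y' ->
    ishom X X' f -> ishom Y Y' g ->
    hom_eq (otens X Y) (otens Y' X')
      (ccomp (otens X Y) (otens X' Y') (otens Y' X')
         (br X' Y') (htens Y Y' f g))
      (ccomp (otens X Y) (otens Y X) (otens Y' X')
         (htens X X' g f) (br X Y));
  br_hex1 : forall X Y Z, isobj X -> isobj Y -> isobj Z ->
    hom_eq (otens X (otens Y Z)) (otens (otens Y Z) X)
      (br X (otens Y Z))
      (ccomp (otens (otens X Y) Z) (otens (otens Y X) Z) (otens Y (otens Z X))
         (htens (otens X Z) (otens Z X) (cid Y) (br X Z))
         (htens Z Z (br X Y) (cid Z)));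
  br_hex2 : forall X Y Z, isobj X -> isobj Y -> isobj Z ->
    hom_eq (otens (otens X Y) Z) (otens Z (otens X Y))
      (br (otens X Y) Z)
      (ccomp (otens X (otens Y Z)) (otens X (otens Z Y)) (otens (otens Z X) Y)
         (htens Y Y (br X Z) (cid Y))
         (htens (otens Y Z) (otens Z Y) (cid X) (br Y Z)))
}.

End TL0.

(* A braiding c on CrysTL restricts to the objects of TL_0.  TL_0 acts on the
   tensor powers of V = kt + kf by cup |-> f(x)t and cap |-> (f(x)t)^*, and every
   morphism is homogeneous for the weight of words in the bicyclic monoid
   <t, f | ft = 1>.  Naturality of c with respect to cup : 0 -> 2 and the
   hexagon c_{1,2} = (1 (x) c_{1,1})(c_{1,1} (x) 1) express the (f, f) entry of
   c_{1,0} through entries of c_{1,1} from tf to tt and ft, which have other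
   weights.  So that entry vanishes, although c_{1,0} is invertible and
   homogeneous. *)

From mathcomp Require Import all_boot all_algebra.
From mathcomp Require Import zify.
Set Implicit Arguments. Unset Strict Implicit. Unset Printing Implicit Defensive.

Import GRing.Theory.
Local Open Scope ring_scope.

Fixpoint words (n : nat) : seq (seq bool) :=
  if n is n'.+1 then [seq x :: w | x <- [:: true; false], w <- words n']
  else [:: [::]].

Lemma size_words n v : v \in words n -> size v = n.
Proof.
elim: n v => [|n IHn] v /=; first by rewrite inE => /eqP ->.
by rewrite !mem_cat in_nil orbF => /orP[] /mapP[w /IHn <- ->].
Qed.

Lemma sum_words_delta (R : pzSemiRingType) n x (F : seq bool -> R) :
  \sum_(v <- words n) (v == x)%:R * F v = (size x == n)%:R * F x.
Proof.
elim: n x F => [|n IHn] [|a x] F.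
- by rewrite big_seq1.
- by rewrite big_seq1 !mul0r.
- rewrite big_allpairs_dep big1 ?mul0r // => b _.
  by rewrite big1 // => v _; rewrite mul0r.
rewrite big_allpairs_dep /= eqSS.
under eq_bigr => b _ do under eq_bigr => v _ do
  rewrite eqseq_cons -mulnb natrM -mulrA.
under eq_bigr => b _ do rewrite -big_distrr IHn /=.
by case: a; rewrite !big_cons big_nil /= ?mul1r ?mul0r ?addr0 ?add0r.
Qed.

Lemma sum_words_cat (R : nmodType) m n (F : seq bool -> R) :
  \sum_(v <- words (m + n)) F v =
  \sum_(a <- words m) \sum_(b <- words n) F (a ++ b).
Proof.
elim: m F => [|m IHm] F; first by rewrite big_seq1.
by rewrite addSn !big_allpairs_dep; apply: eq_bigr => x _; rewrite IHm.
Qed.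

Lemma size_take_drop_neq (T : Type) (w : seq T) m n :
  size w != (m + n)%N -> (size (take m w) != m) || (size (drop m w) != n).
Proof. by rewrite size_take size_drop; case: ltnP => ? ?; apply/orP; lia. Qed.

Definition bicyclic_mul (x y : nat * nat) : nat * nat :=
  (x.1 + (y.1 - x.2), (x.2 - y.1) + y.2)%N.

Lemma bicyclic_mulA : associative bicyclic_mul.
Proof. by move=> [a b] [c d] [e f]; rewrite /bicyclic_mul /=; congr pair; lia. Qed.

Lemma bicyclic_mul1 : left_id (0, 0)%N bicyclic_mul.
Proof. by move=> [a b]; rewrite /bicyclic_mul /= subn0 sub0n. Qed.

(* (a, b) stands for the normal form t^a f^b. *)
Definition weight (w : seq bool) : nat * nat :=
  foldr (fun x => bicyclic_mul (if x then (1, 0) else (0, 1))%N) (0, 0)%N w.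

Lemma weight_cat w1 w2 :
  weight (w1 ++ w2) = bicyclic_mul (weight w1) (weight w2).
Proof.
by elim: w1 => [|x w1 IHw1] /=; rewrite ?bicyclic_mul1 // IHw1 bicyclic_mulA.
Qed.

Section Representation.
Variable k : fieldType.
Local Notation tm := (tm k).

(* [rep t w' w] is the coefficient of the word [w'] in the image of [w] under
   [t], with [true] for t and [false] for f. *)
Fixpoint rep (t : tm) (w' w : seq bool) {struct t} : k :=
  match t with
  | Id n => ((w' == w) && (size w == n))%:R
  | Cup => ((w' == [:: false; true]) && (w == [::]))%:R
  | Cap => ((w' == [::]) && (w == [:: false; true]))%:R
  | Comp f g => \sum_(v <- words (dom f)) rep f w' v * rep g v w
  | Tens f g => rep f (take (cod f) w') (take (dom f) w) *
                rep g (drop (cod f) w') (drop (dom f) w)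
  | Zero _ _ => 0
  | Add f g => rep f w' w + rep g w' w
  | Scal c f => c * rep f w' w
  end.

Lemma rep_size_mismatch t w' w :
  wt t -> ~~ ((size w' == cod t) && (size w == dom t)) -> rep t w' w = 0.
Proof.
rewrite negb_and.
elim: t w' w => [n|||f IHf g IHg|f IHf g IHg|m n|f IHf g IHg|c f IHf] w' w /=.
- by move=> _; case: (w' =P w) => [->|] //=; rewrite orbb => /negbTE ->.
- by move=> _; case: (w' =P _) => [->|] //=; case: (w =P _) => [->|].
- by move=> _; case: (w' =P _) => [->|] //=; case: (w =P _) => [->|].
- case/and3P => wf wg _ mis; apply: big1_seq => v /andP[_ /size_words sv].
  case/orP: mis => mis; first by rewrite IHf ?mul0r // mis.
  by rewrite IHg ?mulr0 // mis orbT.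
- case/andP => wf wg.
  case/orP=> /size_take_drop_neq/orP[] mis.
  + by rewrite IHf ?mul0r // mis.
  + by rewrite IHg ?mulr0 // mis.
  + by rewrite IHf ?mul0r // mis orbT.
  + by rewrite IHg ?mulr0 // mis orbT.
- by [].
- by case/and4P => wf wg /eqP df /eqP cf mis; rewrite IHf // IHg ?addr0 // -df -cf.
- by move=> wf mis; rewrite IHf // mulr0.
Qed.

Lemma rep_homogeneous t w' w : weight w' != weight w -> rep t w' w = 0.
Proof.
elim: t w' w => [n|||f IHf g IHg|f IHf g IHg|m n|f IHf g IHg|c f IHf] w' w /= neq.
- by case: (w' =P w) neq => [->|]; rewrite ?eqxx.
- by case: (w' =P _) neq => [->|] //; case: (w =P _) => [->|].
- by case: (w' =P _) neq => [->|] //; case: (w =P _) => [->|].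
- apply: big1 => v _.
  have [eq_w'v|neq_w'v] := eqVneq (weight w') (weight v).
    by rewrite IHg ?mulr0 // -eq_w'v.
  by rewrite IHf ?mul0r.
- set w'1 := take _ w'; set w1 := take _ w.
  have [eq1|neq1] := eqVneq (weight w'1) (weight w1); last by rewrite IHf ?mul0r.
  rewrite IHg ?mulr0 //; apply: contra neq => /eqP eq2.
  rewrite -(cat_take_drop (cod f) w') -(cat_take_drop (dom f) w).
  by rewrite !weight_cat eq1 eq2.
- by [].
- by rewrite IHf // IHg // addr0.
- by rewrite IHf // mulr0.
Qed.

Lemma rep_eq_sized t u :
  wt t -> wt u -> dom t = dom u -> cod t = cod u ->
  (forall w' w, size w' = cod t -> size w = dom t -> rep t w' w = rep u w' w) ->
  rep t =2 rep u.
Proof.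
move=> wt_t wt_u dtu ctu eq_sized w' w.
have [/andP[/eqP sw' /eqP sw]|mis] :=
  boolP ((size w' == cod t) && (size w == dom t)).
  exact: eq_sized.
by rewrite !rep_size_mismatch // -dtu -ctu.
Qed.

Lemma rep_compA f g h : rep (Comp f (Comp g h)) =2 rep (Comp (Comp f g) h).
Proof.
move=> w' w /=; under eq_bigr do rewrite big_distrr.
rewrite exchange_big /=; apply: eq_bigr => u _; rewrite big_distrl /=.
by apply: eq_bigr => v _; rewrite mulrA.
Qed.

Lemma rep_compIdl f w' w :
  size w' = cod f -> rep (Comp (Id k (cod f)) f) w' w = rep f w' w.
Proof.
move=> sw' /=; rewrite (eq_big_seq (fun v => (v == w')%:R * rep f v w)).
  by rewrite sum_words_delta sw' eqxx mul1r.
by move=> v /size_words ->; rewrite eqxx andbT eq_sym.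
Qed.

Lemma rep_compIdr f w' w :
  size w = dom f -> rep (Comp f (Id k (dom f))) w' w = rep f w' w.
Proof.
move=> sw /=; rewrite (eq_bigr (fun v => (v == w)%:R * rep f w' v)).
  by rewrite sum_words_delta sw eqxx mul1r.
by move=> v _; rewrite sw eqxx andbT mulrC.
Qed.

Lemma rep_tensA f g h : rep (Tens f (Tens g h)) =2 rep (Tens (Tens f g) h).
Proof.
move=> w' w /=; rewrite !take_drop !drop_drop !take_takel ?leq_addr //.
by rewrite mulrA [(cod g + cod f)%N]addnC [(dom g + dom f)%N]addnC.
Qed.

Lemma rep_tens1r f w' w : size w' = cod f -> size w = dom f ->
  rep (Tens f (Id k 0)) w' w = rep f w' w.
Proof. by move=> sw' sw /=; rewrite -sw' -sw !take_size !drop_size eqxx mulr1. Qed.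

Lemma rep_tensId m n w' w : size w' = (m + n)%N -> size w = (m + n)%N ->
  rep (Tens (Id k m) (Id k n)) w' w = rep (Id k (m + n)) w' w.
Proof.
move=> sw' sw /=; have mw : (m <= size w)%N by rewrite sw leq_addr.
rewrite size_takel // size_drop sw addKn !eqxx !andbT -natrM mulnb -eqseq_cat.
  by rewrite !cat_take_drop.
by rewrite !size_takel // sw' leq_addr.
Qed.

Lemma rep_interchange f g f' g' : cod f' = dom f ->
  rep (Comp (Tens f g) (Tens f' g')) =2 rep (Tens (Comp f f') (Comp g g')).
Proof.
move=> cf' w' w /=; rewrite cf' sum_words_cat big_distrl /=.
apply: eq_big_seq => a /size_words sa; rewrite big_distrr /=.
apply: eq_big_seq => b _; rewrite take_size_cat // drop_size_cat //.
by rewrite -!mulrA; congr (_ * _); rewrite mulrCA; congr (_ * _); rewrite mulrCA.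
Qed.

Lemma rep_zig :
  rep (Comp (Tens (Id k 1) (Cap k)) (Tens (Cup k) (Id k 1))) =2 rep (Zero k 1 1).
Proof.
move=> w' w /=; apply: big1 => -[|a [|b v]] _ /=;
  rewrite ?(take0, drop0, andbF, mulr0, mul0r) //.
by case: a; case: b; rewrite /= ?(andbF, mulr0, mul0r).
Qed.

Lemma rep_zag :
  rep (Comp (Tens (Cap k) (Id k 1)) (Tens (Id k 1) (Cup k))) =2 rep (Zero k 1 1).
Proof.
move=> w' w /=; apply: big1 => -[|a [|b v]] _ /=;
  rewrite ?(take0, drop0, andbF, mulr0, mul0r) //.
by case: a; case: b; rewrite /= ?(andbF, mulr0, mul0r).
Qed.

Lemma rep_loop w' w : size w' = 0%N -> size w = 0%N ->
  rep (Comp (Cap k) (Cup k)) w' w = rep (Id k 0) w' w.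
Proof.
move=> /size0nil -> /size0nil ->; rewrite /= !big_cons big_nil !eqseq_cons /=.
by rewrite !(mul0r, mul1r, add0r, addr0).
Qed.

Lemma rep_ax t u : ax t u -> wt t -> wt u -> dom t = dom u -> cod t = cod u ->
  rep t =2 rep u.
Proof.
move=> tu wt_t wt_u dtu ctu; apply: rep_eq_sized => // w' w.
case: tu wt_t wt_u {dtu ctu} => /=
  [f g h|f g|f|f|c f g|c d f|c d f|f|f g h|f|f|f f' g|f g g'|c f g|c f g
  |f g h|f|f|m n|f g f' g'|f f' g|f g g'|c f g|c f g| | |] wt_t wt_u sw' sw.
- by rewrite addrA.
- by rewrite addrC.
- by rewrite addr0.
- by rewrite mulN1r subrr.
- by rewrite mulrDr.
- by rewrite mulrDl.
- by rewrite mulrA.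
- by rewrite mul1r.
- exact: rep_compA.
- exact: rep_compIdl.
- exact: rep_compIdr.
- case/and3P: wt_t => /and4P[_ _ /eqP df _] _ _.
  by rewrite -df -big_split; apply: eq_bigr => v _; rewrite mulrDl.
- by rewrite -big_split; apply: eq_bigr => v _; rewrite mulrDr.
- by rewrite big_distrr /=; apply: eq_bigr => v _; rewrite mulrA.
- by rewrite big_distrr /=; apply: eq_bigr => v _; rewrite mulrCA.
- exact: rep_tensA.
- by rewrite !take0 !drop0 /= mul1r.
- by rewrite !addn0 in sw' sw; apply: rep_tens1r.
- exact: rep_tensId.
- by case/andP: wt_u => /and3P[_ _ /eqP cf'] _; apply: rep_interchange.
- by case/andP: wt_t => /and4P[_ _ /eqP <- /eqP <-] _; rewrite mulrDl.
- by rewrite mulrDr.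
- by rewrite mulrA.
- by rewrite mulrCA.
- exact: rep_zig.
- exact: rep_zag.
- exact: rep_loop.
Qed.

Lemma eqv_type (t u : tm) :
  eqv t u -> [/\ wt t = wt u, dom t = dom u & cod t = cod u].
Proof.
elim=> {t u} /=.
- by move=> t u _ -> -> -> ->.
- by [].
- by move=> t u _ [-> -> ->].
- by move=> t u v _ [-> -> ->] _ [-> -> ->].
- by move=> f f' g g' _ [-> -> ->] _ [-> -> ->].
- by move=> f f' g g' _ [-> -> ->] _ [-> -> ->].
- by move=> f f' g g' _ [-> -> ->] _ [-> -> ->].
- by move=> c f f' _ [-> -> ->].
Qed.

Lemma rep_eqv t u : eqv t u -> wt t -> rep t =2 rep u.
Proof.
elim=> {t u}.
- by move=> t u tu wt_t wt_u dtu ctu _; apply: rep_ax.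
- by [].
- move=> t u tu IH wt_u w' w; symmetry; apply: IH.
  by case: (eqv_type tu) => ->.
- move=> t u v tu IHtu uv IHuv wt_t w' w; rewrite IHtu // IHuv //.
  by case: (eqv_type tu) => <-.
- move=> f f' g g' ff' IHf gg' IHg /= /and3P[wf wg _] w' w.
  case: (eqv_type ff') => _ <- _.
  by apply: eq_bigr => v _; rewrite IHf // IHg.
- move=> f f' g g' ff' IHf gg' IHg /= /andP[wf wg] w' w.
  by case: (eqv_type ff') => _ <- <-; rewrite IHf // IHg.
- by move=> f f' g g' _ IHf _ IHg /= /and4P[wf wg _ _] w' w; rewrite IHf // IHg.
- by move=> c f f' _ IHf /= wf w' w; rewrite IHf.
Qed.

End Representation.

Section CauchyCompletion.
Variable k : fieldType.
Local Notation tm := (tm k).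
Local Open Scope nat_scope.

Lemma eqv_add0 (x : tm) m n : wt x -> dom x = m -> cod x = n ->
  eqv (Add x (Zero k m n)) x.
Proof.
by move=> wx <- <-; apply: eqv_ax (ax_add0 x) _ _ _ _; rewrite //= wx !eqxx.
Qed.

Lemma eqv_idl (x : tm) n : wt x -> cod x = n -> eqv (Comp (Id k n) x) x.
Proof.
by move=> wx <-; apply: eqv_ax (ax_compIdl x) _ _ _ _; rewrite //= wx eqxx.
Qed.

Lemma eqv_idr (x : tm) n : wt x -> dom x = n -> eqv (Comp x (Id k n)) x.
Proof.
by move=> wx <-; apply: eqv_ax (ax_compIdr x) _ _ _ _; rewrite //= wx eqxx.
Qed.

Lemma isobj1 n (e : tm) : wt e -> dom e = n -> cod e = n -> eqv (Comp e e) e ->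
  isobj (CObj [:: n] (fun _ _ => e)).
Proof.
move=> we de ce ee; split=> -[|i] [|j] //= _ _; rewrite /mmul /=.
by apply: eqv_trans ee; apply: eqv_add0 => //=; rewrite we ce de eqxx.
Qed.

Lemma ishom1 a b (ea eb m : tm) :
  wt ea -> dom ea = a -> cod ea = a -> wt eb -> dom eb = b -> cod eb = b ->
  wt m -> dom m = a -> cod m = b -> eqv (Comp eb (Comp m ea)) m ->
  ishom (CObj [:: a] (fun _ _ => ea)) (CObj [:: b] (fun _ _ => eb)) (fun _ _ => m).
Proof.
move=> wea dea cea web deb ceb wm dm cm em.
split=> -[|i] [|j] //= _ _; rewrite /mmul /=.
apply: eqv_trans em; apply: eqv_trans (eqv_add0 _ _ _) _ => //=.
  by rewrite wm wea web dm cm dea cea deb !eqxx.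
apply: eqv_comp (eqv_refl _) _.
by apply: eqv_add0 => //=; rewrite wm wea dm cea eqxx.
Qed.

Definition tl_obj (n : nat) : cobj k := CObj [:: n] (fun _ _ => Id k n).

Lemma isobj_tl n : isobj (tl_obj n).
Proof. by apply: isobj1 => //; apply: eqv_idl. Qed.

Lemma isobj_tl_tens a b : isobj (otens (tl_obj a) (tl_obj b)).
Proof.
apply: (@isobj1 (a + b) (Tens (Id k a) (Id k b))) => //.
apply: eqv_trans (eqv_ax (ax_interchange _ _ _ _) _ _ _ _) _ => //=.
  by rewrite !eqxx.
by apply: eqv_tens; apply: eqv_idl.
Qed.

Lemma ishom_tl_id n : ishom (tl_obj n) (tl_obj n) (fun _ _ => Id k n).
Proof.
apply: ishom1; rewrite //= ?eqxx.
by apply: eqv_trans (eqv_idl _ _) (eqv_idl _ _); rewrite //= eqxx.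
Qed.

Lemma ishom_tl_cup :
  ishom (tl_obj 0) (otens (tl_obj 1) (tl_obj 1)) (fun _ _ => Cup k).
Proof.
apply: (@ishom1 0 2 (Id k 0) (Tens (Id k 1) (Id k 1))) => //.
apply: eqv_trans (eqv_comp (eqv_refl _) (eqv_idr _ _)) _ => //.
have tensId11 := eqv_ax (ax_tensId k 1 1) isT isT erefl erefl.
apply: eqv_trans (eqv_comp tensId11 (eqv_refl _)) _.
exact: eqv_idl.
Qed.

End CauchyCompletion.

Section NoBraiding.
Variables (k : fieldType) (B : braiding k).
Local Notation obj := (tl_obj k).
Local Open Scope nat_scope.

Lemma br_entry_type X Y m n : isobj X -> isobj Y ->
  osz X = [:: m] -> osz Y = [:: n] ->
  [/\ wt (br B X Y 0 0), dom (br B X Y 0 0) = m + n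
    & cod (br B X Y 0 0) = n + m].
Proof.
move=> oX oY sX sY; have := (br_hom B oX oY).1 0 0.
by rewrite /= sX sY; apply.
Qed.

Let b11 := br B (obj 1) (obj 1) 0 0.
Let c10 := br B (obj 1) (obj 0) 0 0.
Let c12 := br B (obj 1) (otens (obj 1) (obj 1)) 0 0.

Lemma hexagon_entry_eq0 :
  rep c12 [:: false; true; false] [:: false; false; true] = 0%R.
Proof.
have [_ db cb] := br_entry_type (isobj_tl k 1) (isobj_tl k 1) erefl erefl.
have [wc _ _] := br_entry_type (isobj_tl k 1) (isobj_tl_tens k 1 1) erefl erefl.
have hex := br_hex1 B (isobj_tl k 1) (isobj_tl k 1) (isobj_tl k 1)
  (i:=0) (j:=0) isT isT.
rewrite (rep_eqv hex wc) /= db cb /= !big_cons big_nil /=.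
rewrite !mod0n !div0n -/b11.
rewrite (@rep_homogeneous _ b11 [:: true; false] [:: true; true]) //.
rewrite (@rep_homogeneous _ b11 [:: true; false] [:: false; true]) //.
by rewrite !(mul0r, mulr0, addr0).
Qed.

Lemma naturality_cup_entry :
  rep c12 [:: false; true; false] [:: false; false; true] =
  rep c10 [:: false] [:: false].
Proof.
have [wc dc cc] := br_entry_type (isobj_tl k 1) (isobj_tl_tens k 1 1) erefl erefl.
have natural := br_nat B (isobj_tl k 1) (isobj_tl k 1) (isobj_tl k 0)
  (isobj_tl_tens k 1 1) (ishom_tl_id k 1) (ishom_tl_cup k) (i:=0) (j:=0) isT isT.
have := rep_eqv natural _ [:: false; true; false] [:: false].
rewrite /= wc dc cc /= => /(_ isT).
by rewrite !big_cons !big_nil /= !(mul0r, mulr0, mul1r, mulr1, add0r, addr0).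
Qed.

Lemma br_iso_entry_neq0 : rep c10 [:: false] [:: false] != 0%R.
Proof.
have [D [[hD _] [inv _]]] := br_iso B (isobj_tl k 1) (isobj_tl k 0).
have [_ dD _] := hD 0 0 isT isT.
have := rep_eqv (eqv_sym (inv 0 0 isT isT)) isT [:: false] [:: false].
rewrite /= dD /= !big_cons big_nil /= -/c10 (@rep_homogeneous _ c10 [:: true]) //.
rewrite !(mul1r, mulr0, add0r, addr0) => one_eq.
by apply: contra_eq_neq one_eq => ->; rewrite mulr0 oner_eq0.
Qed.

End NoBraiding.

Unset Implicit Arguments.

Theorem mainTheorem13 (k : fieldType) : ~ inhabited (braiding k).
Proof.
case=> B; have := br_iso_entry_neq0 B.
by rewrite -naturality_cup_entry hexagon_entry_eq0 eqxx.
Qed.
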